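(* Let $Q_1=(Q_{1,1},\ldots,Q_{1,d})$ and $Q_2=(Q_{2,1},\ldots,Q_{2,d})$ be the expected relative abundance vectors of two populations. (i) If $I_{0,1},I_{0,2}\subset[d]$ are two reference sets (with constants $b_1,b_2>0$ respectively) satisfying $|I_{0,1}|>d/2$ and $|I_{0,2}|>d/2$, then the reference-based null and alternative hypotheses defined using $I_{0,1}$ coincide with those defined using $I_{0,2}$; that is, the hypotheses are well defined when the reference set is assumed to have more than $d/2$ elements. (ii) In contrast, there exist instances $(Q_1,Q_2)$ with two reference sets $I_{0,1}$, $I_{0,2}$ satisfying $|I_{0,1}|,|I_{0,2}|\le d/2$ such that the null hypotheses defined by $I_{0,1}$ and by $I_{0,2}$ contradict each other (a component is null under one reference set and non-null under the other).
   Context: There are $d$ components, $[d]=\{1,\ldots,d\}$. For two populations $\pi_1,\pi_2$ of absolute abundance vectors $A=(A_1,\ldots,A_d)\in[0,\infty)^d$, the relative abundance is $P_i=A_i/\sum_{i'=1}^dA_{i'}$ and $Q_{k,i}=\mathbb{E}_{\pi_k}(P_i)$ for $k=1,2$. A subset $I_0\subset[d]$ is called a reference set if there is a constant $b>0$ with $Q_{1,i}=bQ_{2,i}$ for all $i\in I_0$. Given a reference set $I_0$, the reference-based hypotheses for component $i$ are $H_{i,0}: Q_{1,i}/\sum_{i'\in I_0}Q_{1,i'}=Q_{2,i}/\sum_{i'\in I_0}Q_{2,i'}$ versus $H_{i,1}: Q_{1,i}/\sum_{i'\in I_0}Q_{1,i'}\ne Q_{2,i}/\sum_{i'\in I_0}Q_{2,i'}$.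 *)

From mathcomp Require Import all_boot all_order all_algebra.
From mathcomp Require Import reals.
Set Implicit Arguments. Unset Strict Implicit. Unset Printing Implicit Defensive.
Import Order.TTheory GRing.Theory Num.Theory.
Local Open Scope ring_scope.

Definition rel_abund (R : realType) (d : nat) (Q : 'I_d -> R) : Prop :=
  (forall i, 0 < Q i) /\ \sum_(i < d) Q i = 1.

Definition reference_set (R : realType) (d : nat) (Q1 Q2 : 'I_d -> R)
  (I0 : {set 'I_d}) : Prop :=
  exists b : R, 0 < b /\ forall i, i \in I0 -> Q1 i = b * Q2 i.

Definition null_hyp (R : realType) (d : nat) (Q1 Q2 : 'I_d -> R)
  (I0 : {set 'I_d}) (i : 'I_d) : Prop :=
  Q1 i / (\sum_(j in I0) Q1 j) = Q2 i / (\sum_(j in I0) Q2 j).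

Definition alt_hyp (R : realType) (d : nat) (Q1 Q2 : 'I_d -> R)
  (I0 : {set 'I_d}) (i : 'I_d) : Prop :=
  Q1 i / (\sum_(j in I0) Q1 j) <> Q2 i / (\sum_(j in I0) Q2 j).

From mathcomp Require Import all_boot all_order all_algebra.
From mathcomp Require Import reals.
From mathcomp Require Import zify lra.
Set Implicit Arguments. Unset Strict Implicit. Unset Printing Implicit Defensive.
Import Order.TTheory GRing.Theory Num.Theory.
Local Open Scope ring_scope.

(* If Q1 = b Q2 on a nonempty reference set I0, the reference sums satisfy
   S1 = b S2, so the null hypothesis for i says exactly Q1 i = b Q2 i. Two
   reference sets of more than d/2 elements share a component k, and
   Q1 k = b1 Q2 k = b2 Q2 k forces b1 = b2: both sets yield the same
   hypotheses. For small reference sets this fails: with Q1 uniform and Q2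
   putting double weight on component 0, every singleton is a reference set,
   and component 0 is null relative to {0} but not relative to {1}. *)

Lemma setI_neq0_card (T : finType) (A B : {set T}) :
  (#|T| < #|A| + #|B|)%N -> A :&: B != set0.
Proof.
move=> lt_T_AB; rewrite -card_gt0.
have := cardsUI A B; have := max_card (A :|: B); lia.
Qed.

Lemma sumr_gt0_in (R : numDomainType) (T : finType) (Q : T -> R)
    (I : {set T}) (k : T) :
  (forall i, 0 < Q i) -> k \in I -> 0 < \sum_(j in I) Q j.
Proof.
move=> Q_gt0 kI; rewrite (bigD1 k) //= ltr_wpDr ?Q_gt0 //.
by apply: sumr_ge0 => j _; apply: ltW.
Qed.

Section ReferenceSet.

Variables (R : realType) (d : nat) (Q1 Q2 : 'I_d -> R).
Hypothesis Q2_gt0 : forall i, 0 < Q2 i.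

Lemma null_hyp_scale (i : 'I_d) (I0 : {set 'I_d}) (b : R) (k : 'I_d) :
  0 < b -> k \in I0 -> (forall j, j \in I0 -> Q1 j = b * Q2 j) ->
  null_hyp Q1 Q2 I0 i <-> Q1 i = b * Q2 i.
Proof.
move=> b_gt0 kI0 Q1E; rewrite /null_hyp.
have -> : \sum_(j in I0) Q1 j = b * \sum_(j in I0) Q2 j.
  by rewrite mulr_sumr; apply: eq_bigr => j /Q1E.
have S_neq0 : \sum_(j in I0) Q2 j != 0.
  by rewrite gt_eqF // (sumr_gt0_in Q2_gt0 kI0).
have b_neq0 : b != 0 by rewrite gt_eqF.
split=> [/eqP | ->].
- by rewrite eqr_div ?mulf_neq0 // mulrCA mulrA => /eqP /(mulIf S_neq0).
- by rewrite -mulf_div divff ?mul1r.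
Qed.

Lemma reference_set1 (j : 'I_d) : 0 < Q1 j -> reference_set Q1 Q2 [set j].
Proof.
move=> Q1j_gt0; exists (Q1 j / Q2 j); split; first by rewrite divr_gt0.
by move=> l /set1P ->; rewrite mulfVK ?gt_eqF.
Qed.

Lemma null_hyp_self (i : 'I_d) : 0 < Q1 i -> null_hyp Q1 Q2 [set i] i.
Proof. by move=> Q1i_gt0; rewrite /null_hyp !big_set1 !divff ?gt_eqF. Qed.

End ReferenceSet.

Lemma null_hyp_large_ref (R : realType) (d : nat) (Q1 Q2 : 'I_d -> R)
    (I1 I2 : {set 'I_d}) (i : 'I_d) :
  (forall j, 0 < Q2 j) ->
  reference_set Q1 Q2 I1 -> reference_set Q1 Q2 I2 ->
  (d < 2 * #|I1|)%N -> (d < 2 * #|I2|)%N ->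
  null_hyp Q1 Q2 I1 i <-> null_hyp Q1 Q2 I2 i.
Proof.
move=> Q2_gt0 [b1 [b1_gt0 Q1E1]] [b2 [b2_gt0 Q1E2]] big1 big2.
have : I1 :&: I2 != set0 by apply: setI_neq0_card; rewrite card_ord; lia.
case/set0Pn=> k /setIP [kI1 kI2].
have b2E : b2 = b1.
  by apply: (mulIf (lt0r_neq0 (Q2_gt0 k))); rewrite -Q1E1 // -Q1E2.
rewrite (null_hyp_scale Q2_gt0 i b1_gt0 kI1 Q1E1).
by rewrite (null_hyp_scale Q2_gt0 i b2_gt0 kI2 Q1E2) b2E.
Qed.

Section DoubledComponent.

Variables (R : realType) (n : nat) (i0 : 'I_n.+1).

Definition uniform_abund : 'I_n.+1 -> R := fun=> n.+1%:R^-1.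

Definition doubled_abund : 'I_n.+1 -> R :=
  fun j => (1 + (j == i0)%:R) / n.+2%:R.

Lemma rel_abund_uniform : rel_abund uniform_abund.
Proof.
split=> [j|]; first by rewrite invr_gt0 ltr0n.
by rewrite sumr_const card_ord -[LHS]mulr_natr mulVf ?pnatr_eq0.
Qed.

Lemma rel_abund_doubled : rel_abund doubled_abund.
Proof.
split=> [j|]; first by rewrite divr_gt0 ?ltr0n // ltr_wpDr ?ler0n.
rewrite -mulr_suml big_split /= sumr_const card_ord (bigD1 i0) //= eqxx.
rewrite big1 => [|j /negbTE -> //]; by rewrite addr0 natr1 mulfV ?pnatr_eq0.
Qed.

Lemma doubled_not_null (i1 : 'I_n.+1) :
  i1 != i0 -> alt_hyp uniform_abund doubled_abund [set i1] i0.
Proof.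
move=> /negbTE i10; rewrite /alt_hyp !big_set1 /uniform_abund /doubled_abund.
rewrite i10 eqxx divff ?invr_eq0 ?pnatr_eq0 // addr0 mul1r invrK.
by rewrite divfK ?pnatr_eq0 //=; lra.
Qed.

End DoubledComponent.

Arguments uniform_abund {R n}.
Arguments doubled_abund {R n} i0.

Theorem proposition1 (R : realType) :
  (* (i) reference sets of size > d/2 give the same hypotheses *)
  (forall (d : nat) (Q1 Q2 : 'I_d -> R) (I1 I2 : {set 'I_d}),
      rel_abund Q1 -> rel_abund Q2 ->
      reference_set Q1 Q2 I1 -> reference_set Q1 Q2 I2 ->
      (d < 2 * #|I1|)%N -> (d < 2 * #|I2|)%N ->
      forall i : 'I_d,
        (null_hyp Q1 Q2 I1 i <-> null_hyp Q1 Q2 I2 i) /\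
        (alt_hyp Q1 Q2 I1 i <-> alt_hyp Q1 Q2 I2 i))
  /\
  (* (ii) with reference sets of size <= d/2 the hypotheses may conflict *)
  (forall d : nat, (2 <= d)%N ->
     exists (Q1 Q2 : 'I_d -> R) (I1 I2 : {set 'I_d}) (i : 'I_d),
       rel_abund Q1 /\ rel_abund Q2 /\
       reference_set Q1 Q2 I1 /\ reference_set Q1 Q2 I2 /\
       (0 < #|I1|)%N /\ (2 * #|I1| <= d)%N /\
       (0 < #|I2|)%N /\ (2 * #|I2| <= d)%N /\
       null_hyp Q1 Q2 I1 i /\ alt_hyp Q1 Q2 I2 i).
Proof.
split=> [d Q1 Q2 I1 I2 _ [Q2_gt0 _] ref1 ref2 big1 big2 i | [|[|n]] // _].
  have nullE : null_hyp Q1 Q2 I1 i <-> null_hyp Q1 Q2 I2 i.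
    exact: null_hyp_large_ref.
  by split=> //; split=> not_null /nullE.
have Q1_abund := rel_abund_uniform R n.+1.
have Q2_abund := rel_abund_doubled R (ord0 : 'I_n.+2).
have [[Q1_gt0 _] [Q2_gt0 _]] := (Q1_abund, Q2_abund).
exists uniform_abund, (doubled_abund ord0), [set ord0], [set ord_max], ord0.
rewrite !cards1; do 2 split => //.
do 2 (split; first exact: (reference_set1 Q2_gt0 (Q1_gt0 _))).
do 5 split => //.
  exact: (null_hyp_self Q2_gt0 (Q1_gt0 _)).
exact: doubled_not_null.
Qed.
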